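(* Let $\lambda:E_B\to\mathbb R_+$, let $\mathcal N_e$ be distributions on $\mathcal W_e$ ($e\in E_B$), let $n:V_B\to\mathbb N$ with $n_b=\#p_{\mathcal C}^{-1}(b)$ for $b\in I_B$, and let $(\mathcal G,w)$, $\mathcal G=(G,\pi,\mathrm{Id})$, be a random sparse lift of $\mathbb B$ along $(n,\lambda)$ with distribution $\mathcal N$. For $\delta\in(0,1]$ and $(a,b)\in E_B$ let $D_{(a,b)}=7\frac{n_b}{n_a}\lambda_{(a,b)}+\log n_a+\log\#E_B-\log\delta$. Then $\mathbb P\big(\forall(a,b)\in E_B,\ \sup_{v\in\pi^{-1}(a)}\#(G(v,-)\cap\pi^{-1}(b))\le D_{(a,b)}\big)\ge1-\delta$.
   Context: $B=(V_B,E_B)$ is a finite directed acyclic graph, with a perceptron module $\mathbb B$ over it whose input vertex set is $I_B\subseteq V_B$ and with weight spaces $\mathcal W_e$ (finite-dimensional real inner product spaces) for $e\in E_B$; $\mathcal C$ is a finite set with $p_{\mathcal C}:\mathcal C\to I_B$. For a graph $G$, $G(v,-)=\{u:(v,u)\in E\}$. Random sparse lift along $(n,\lambda)$ with distribution $\mathcal N$: identify $p_{\mathcal C}^{-1}(b)$ with $\{0,\dots,n_b-1\}$ for $b\in I_B$; vertices $V=\{(b,i):b\in V_B,0\le i<n_b\}$, $\pi(b,i)=b$, candidate edges $E_C=\{(u,v)\in V\times V:(\pi(u),\pi(v))\in E_B\}$; independent $m_{(u,v)}\sim\mathrm{Bernoulli}(\lambda_{\pi(u,v)}/n_{\pi(u)})$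 and $w_e\sim\mathcal N_{\pi(e)}$ for $e\in E_C$; $G=(V,\{e\in E_C:m_e=1\})$, $\mathcal G=(G,\pi,\mathrm{Id})$, weights restricted to edges of $G$. *)

From HB Require Import structures.
From mathcomp Require Import all_boot all_order all_algebra.
From mathcomp Require Import reals exp.

Set Implicit Arguments.
Unset Strict Implicit.
Unset Printing Implicit Defensive.

Import Order.TTheory GRing.Theory Num.Theory.
Local Open Scope ring_scope.

(* A finite directed graph (V_B, E_B) is a finType VB with an edge relation
   EB : rel VB.  It is acyclic iff no vertex reaches itself by a path of
   positive length. *)
Definition acyclic (T : finType) (e : rel T) : Prop :=
  forall x : T, ~~ [exists y, e x y && connect e y x].

Definition num_edges (VB : finType) (EB : rel VB) : nat :=
  #|[set x : VB * VB | EB x.1 x.2]|.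

(* Vertices of the lift: V = {(b,i) : b in V_B, 0 <= i < n_b}; pi = tag. *)
Definition liftV (VB : finType) (n : VB -> nat) : finType :=
  {b : VB & 'I_(n b)}.

Definition candE (VB : finType) (EB : rel VB) (n : VB -> nat) : finType :=
  {x : liftV n * liftV n | EB (tag x.1) (tag x.2)}.

(* A realisation of the Bernoulli masks (m_e)_{e in E_C}. *)
Definition config (VB : finType) (EB : rel VB) (n : VB -> nat) : finType :=
  {ffun candE EB n -> bool}.

Definition edge_prob (R : realType) (VB : finType) (EB : rel VB)
    (n : VB -> nat) (lam : VB -> VB -> R) (e : candE EB n) : R :=
  lam (tag (val e).1) (tag (val e).2) / (n (tag (val e).1))%:R.

Definition config_prob (R : realType) (VB : finType) (EB : rel VB)
    (n : VB -> nat) (lam : VB -> VB -> R) (m : config EB n) : R :=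
  \prod_(e : candE EB n)
     (if m e then edge_prob lam e else 1 - edge_prob lam e).

Definition lift_edge (VB : finType) (EB : rel VB) (n : VB -> nat)
    (m : config EB n) (u v : liftV n) : bool :=
  [exists e : candE EB n, (val e == (u, v)) && m e].

Definition out_deg_to (VB : finType) (EB : rel VB) (n : VB -> nat)
    (m : config EB n) (v : liftV n) (b : VB) : nat :=
  #|[set u : liftV n | (tag u == b) && lift_edge m v u]|.

Definition Dbound (R : realType) (VB : finType) (EB : rel VB)
    (n : VB -> nat) (lam : VB -> VB -> R) (delta : R) (a b : VB) : R :=
  7 * ((n b)%:R / (n a)%:R) * lam a b + ln (n a)%:R
  + ln (num_edges EB)%:R - ln delta.

(* The event: for all (a,b) in E_B, sup_{v in pi^{-1}(a)} #(...) <= D_{(a,b)}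
   (a sup over a finite set is <= D iff every element is). *)
Definition good_event (R : realType) (VB : finType) (EB : rel VB)
    (n : VB -> nat) (lam : VB -> VB -> R) (delta : R) (m : config EB n) : bool :=
  [forall a : VB, forall b : VB, EB a b ==>
     [forall v : liftV n, (tag v == a) ==>
        ((out_deg_to m v b)%:R <= Dbound EB n lam delta a b)]].

Definition prob_event (R : realType) (VB : finType) (EB : rel VB)
    (n : VB -> nat) (lam : VB -> VB -> R) (P : pred (config EB n)) : R :=
  \sum_(m : config EB n | P m) config_prob lam m.

From HB Require Import structures.
From mathcomp Require Import all_boot all_order all_algebra.
From mathcomp Require Import reals exp sequences.
From mathcomp Require Import ring lra.

(* The out-degree of a lifted vertex v over a towards the fiber over b is a sum of at most
   n_b independent Bernoulli(lam_ab / n_a) variables.  The exponential Markov inequality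
   P(X > D) <= E[e^X] e^-D and 1 + p(e - 1) <= exp(p(e - 1)) bound its tail by
   exp((e - 1) n_b lam_ab / n_a - D) <= exp(3 n_b lam_ab / n_a - D), which at D = D_ab
   is at most delta / (n_a #E_B).
   A union bound over the edges (a, b) and the n_a vertices over a sums these to delta. *)

Set Implicit Arguments.
Unset Strict Implicit.
Unset Printing Implicit Defensive.

Import Order.TTheory GRing.Theory Num.Theory.
Local Open Scope ring_scope.

Lemma ler_sum_subpred (R : numDomainType) (I : finType) (P Q : pred I)
    (F : I -> R) :
  (forall i, Q i -> 0 <= F i) -> (forall i, P i -> Q i) ->
  \sum_(i | P i) F i <= \sum_(i | Q i) F i.
Proof.
move=> F_ge0 PQ; rewrite [leRHS](bigID P) /=.
have -> : \sum_(i | Q i && P i) F i = \sum_(i | P i) F i.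
  by apply: eq_bigl => i; case/boolP: (P i) => [/PQ -> | _]; rewrite ?andbF.
by rewrite lerDl sumr_ge0 // => i /andP[/F_ge0].
Qed.

Lemma union_bound (R : numDomainType) (I T : finType) (Q : pred I)
    (P : I -> pred T) (w : T -> R) :
  (forall t, 0 <= w t) ->
  \sum_(t | [exists i, Q i && P i t]) w t <= \sum_(i | Q i) \sum_(t | P i t) w t.
Proof.
move=> w_ge0; under [leRHS]eq_bigr do rewrite big_mkcond /=.
rewrite big_mkcond exchange_big /=; apply: ler_sum => t _.
case: ifP => [/existsP[i /andP[Qi Pit]] | _].
  by rewrite (bigD1 i) //= Pit lerDl sumr_ge0 // => j _; case: ifP.
by rewrite sumr_ge0 // => i _; case: ifP.
Qed.

Lemma mulrn_div_le (R : numFieldType) (c : R) k : 0 <= c -> c / k%:R *+ k <= c.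
Proof.
by case: k => [|k] c_ge0; rewrite ?mulr0n // -mulr_natr divfK ?pnatr_eq0.
Qed.

Lemma expR1_le4 (R : realType) : expR (1 : R) <= 4.
Proof.
have half_le : (2^-1 : R) <= expR (- 2^-1) by have := expR_ge1Dx (- 2^-1 : R); lra.
have half_inv : expR (2^-1) * expR (- 2^-1) = 1 :> R by rewrite -expRD subrr expR0.
have -> : expR (1 : R) = expR (2^-1) ^+ 2 by rewrite -expRM_natl mulfV // pnatr_eq0.
have := expR_ge0 (2^-1 : R); nra.
Qed.

Section BernoulliProduct.

Variables (R : realType) (I : finType) (p : I -> R).

Definition bernoulli_weight (m : {ffun I -> bool}) : R :=
  \prod_i (if m i then p i else 1 - p i).

Lemma bernoulli_expect_prod (h : I -> bool -> R) :
  \sum_m bernoulli_weight m * \prod_i h i (m i) =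
  \prod_i (p i * h i true + (1 - p i) * h i false).
Proof.
transitivity (\sum_(m : {ffun I -> bool})
    \prod_i ((if m i then p i else 1 - p i) * h i (m i))).
  by apply: eq_bigr => m _; rewrite big_split.
rewrite -(bigA_distr_bigA (fun i b => (if b then p i else 1 - p i) * h i b)).
by apply: eq_bigr => i _; rewrite big_bool addrC.
Qed.

Lemma bernoulli_weight_sum1 : \sum_m bernoulli_weight m = 1.
Proof.
transitivity (\sum_m bernoulli_weight m * \prod_i (fun _ _ => 1 : R) i (m i)).
  by apply: eq_bigr => m _; rewrite big1_eq mulr1.
by rewrite (bernoulli_expect_prod (fun _ _ => 1)) big1 // => i _; rewrite !mulr1 subrKC.
Qed.

Hypothesis p01 : forall i, 0 <= p i <= 1.

Lemma bernoulli_weight_ge0 m : 0 <= bernoulli_weight m.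
Proof.
apply: prodr_ge0 => i _; have /andP[p_ge0 p_le1] := p01 i.
by case: (m i); rewrite ?subr_ge0.
Qed.

Lemma bernoulli_count_tail (S : pred I) (D : R) :
  \sum_(m : {ffun I -> bool} | D < #|[set i | S i && m i]|%:R) bernoulli_weight m
    <= expR ((expR 1 - 1) * \sum_(i | S i) p i - D).
Proof.
pose tilt i (b : bool) : R := if S i && b then expR 1 else 1.
have tilt_ge0 i b : 0 <= tilt i b by rewrite /tilt; case: ifP; rewrite ?expR_ge0.
have expR_count (m : {ffun I -> bool}) :
    expR #|[set i | S i && m i]|%:R = \prod_i tilt i (m i).
  rewrite -[X in expR X]mulr1 expRM_natl -prodr_const -big_mkcond /=.
  by apply: eq_bigl => i; rewrite inE.
(* exponential Markov inequality: [1 (D < k) <= expR (k - D)] *)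
apply: le_trans
  (_ : \sum_m bernoulli_weight m * (expR (- D) * \prod_i tilt i (m i)) <= _).
  rewrite big_mkcond; apply: ler_sum => m _; case: ifP => [tail | _]; last first.
    by rewrite !mulr_ge0 ?bernoulli_weight_ge0 ?expR_ge0 ?prodr_ge0.
  apply: ler_peMr; first exact: bernoulli_weight_ge0.
  by rewrite -expR_count -expRD -[leLHS]expR0 ler_expR addrC subr_ge0 ltW.
under eq_bigr do rewrite mulrCA.
rewrite -mulr_sumr (bernoulli_expect_prod tilt) mulrC expRD ler_wpM2r ?expR_ge0 //.
rewrite mulr_sumr expR_sum [leRHS]big_mkcond /=.
apply: ler_prod => i _.
have /andP[p_ge0 p_le1] := p01 i.
rewrite /tilt andbT andbF; case: (S i); rewrite !mulr1.
  rewrite addr_ge0 ?mulr_ge0 ?expR_ge0 ?subr_ge0 //=.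
  by rewrite [leLHS](_ : _ = 1 + (expR 1 - 1) * p i) ?expR_ge1Dx //; ring.
by rewrite subrKC ler01 lexx.
Qed.

End BernoulliProduct.

Section SparseLift.

Variables (R : realType) (VB : finType) (EB : rel VB) (n : VB -> nat).
Variable lam : VB -> VB -> R.

Lemma card_fiber b : #|[set u : liftV n | tag u == b]| = n b.
Proof.
have -> : [set u : liftV n | tag u == b]
          = [set Tagged (fun c => 'I_(n c)) i | i : 'I_(n b)].
  apply/setP => -[c i]; rewrite inE /=.
  apply/eqP/imsetP => [<- | [j _ /(congr1 tag) //]].
  by exists i.
by rewrite card_imset ?card_ord //; exact: eq_from_Tagged.
Qed.

Lemma sum_fiber_const (c : R) a : \sum_(v : liftV n | tag v == a) c = c *+ n a.
Proof. by rewrite -card_fiber -sumr_const; apply: eq_bigl => v; rewrite inE. Qed.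

Lemma fiber_size_gt0 (v : liftV n) : (0 < n (tag v))%N.
Proof. by case: v => c i; apply: leq_ltn_trans (ltn_ord i). Qed.

Hypothesis lam_ge0 : forall a b, EB a b -> 0 <= lam a b.
Hypothesis lam_le : forall a b, EB a b -> (0 < n a)%N -> lam a b <= (n a)%:R.

Lemma edge_prob01 (e : candE EB n) : 0 <= edge_prob lam e <= 1.
Proof.
case: e => -[u w] /= Euw; rewrite /edge_prob /=.
have n_gt0 : 0 < (n (tag u))%:R :> R by rewrite ltr0n fiber_size_gt0.
by rewrite divr_ge0 ?lam_ge0 ?ler0n //= ler_pdivrMr // mul1r lam_le ?fiber_size_gt0.
Qed.

Definition out_cands (v : liftV n) (b : VB) : pred (candE EB n) :=
  fun e => ((val e).1 == v) && (tag (val e).2 == b).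

Lemma out_deg_to_le (m : config EB n) v b :
  (out_deg_to m v b <= #|[set e | out_cands v b e && m e]|)%N.
Proof.
apply: leq_trans (leq_imset_card (fun e : candE EB n => (val e).2) _).
apply: subset_leq_card; apply/subsetP => u.
rewrite inE => /andP[/eqP u_b /existsP[e /andP[/eqP e_vu me]]].
by apply/imsetP; exists e; rewrite ?inE /out_cands e_vu ?u_b ?eqxx ?me.
Qed.

Lemma card_out_cands v b : (#|[set e | out_cands v b e]| <= n b)%N.
Proof.
rewrite -card_fiber -(@card_in_imset _ _ (fun e : candE EB n => (val e).2)).
  apply: subset_leq_card; apply/subsetP => u /imsetP[e].
  by rewrite !inE => /andP[_ e_b] ->.
move=> e1 e2; rewrite !inE => /andP[/eqP e1_v _] /andP[/eqP e2_v _] e12.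
apply: val_inj.
by rewrite [val e1]surjective_pairing [val e2]surjective_pairing e1_v e2_v e12.
Qed.

Lemma sum_edge_prob_out_cands v b : EB (tag v) b ->
  \sum_(e | out_cands v b e) edge_prob lam e
    <= (n b)%:R / (n (tag v))%:R * lam (tag v) b.
Proof.
move=> Evb; pose q := lam (tag v) b / (n (tag v))%:R.
have -> : \sum_(e | out_cands v b e) edge_prob lam e
          = q *+ #|[set e | out_cands v b e]|.
  rewrite -sumr_const big_mkcond [RHS]big_mkcond; apply: eq_bigr => e _.
  by rewrite inE /q; case/boolP: (out_cands v b e) => // /andP[/eqP <- /eqP <-].
have q_ge0 : 0 <= q by rewrite divr_ge0 ?lam_ge0 ?ler0n.
rewrite [leRHS](_ : _ = q * (n b)%:R); last by rewrite /q; ring.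
by rewrite -mulr_natr ler_wpM2l // ler_nat card_out_cands.
Qed.

Lemma out_deg_tail v b D : EB (tag v) b ->
  \sum_(m : config EB n | D < (out_deg_to m v b)%:R) config_prob lam m
    <= expR (3 * ((n b)%:R / (n (tag v))%:R * lam (tag v) b) - D).
Proof.
move=> Evb.
pose count_out (m : config EB n) := #|[set e | out_cands v b e && m e]|.
apply: le_trans (_ : \sum_(m | D < (count_out m)%:R) config_prob lam m <= _).
  apply: ler_sum_subpred => [m _ | m]; first exact: bernoulli_weight_ge0 edge_prob01 m.
  by move/lt_le_trans; apply; rewrite ler_nat out_deg_to_le.
apply: le_trans (bernoulli_count_tail edge_prob01 _ _) _.
rewrite ler_expR lerD2r ler_pM ?sumr_ge0 ?sum_edge_prob_out_cands //.
- by have := expR_ge1Dx (1 : R); lra.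
- by move=> e _; case/andP: (edge_prob01 e).
- by have := expR1_le4 R; lra.
Qed.

Lemma prob_eventC (P : pred (config EB n)) :
  prob_event lam P = 1 - \sum_(m | ~~ P m) config_prob lam m.
Proof.
by rewrite -(bernoulli_weight_sum1 (@edge_prob _ _ EB n lam)) (bigID P) addrK.
Qed.

Lemma good_eventN delta (m : config EB n) :
  ~~ good_event lam delta m =
  [exists ab : VB * VB, EB ab.1 ab.2 && [exists v : liftV n, (tag v == ab.1) &&
     (Dbound EB n lam delta ab.1 ab.2 < (out_deg_to m v ab.2)%:R)]].
Proof.
apply/idP/existsP => [/forallPn[a /forallPn[b]] | [[a b] /andP[Eab /existsP[v]]]].
  rewrite negb_imply => /andP[Eab /forallPn[v]]; rewrite negb_imply -ltNge => va_lt.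
  by exists (a, b); rewrite Eab; apply/existsP; exists v.
move=> /andP[va lt]; apply/forallPn; exists a; apply/forallPn; exists b.
by rewrite negb_imply Eab; apply/forallPn; exists v; rewrite negb_imply va -ltNge.
Qed.

Lemma tail_le_Dbound a b delta : EB a b -> (0 < n a)%N -> 0 < delta ->
  expR (3 * ((n b)%:R / (n a)%:R * lam a b) - Dbound EB n lam delta a b)
    <= delta / (num_edges EB)%:R / (n a)%:R.
Proof.
move=> Eab na_gt0 delta_gt0.
have E_gt0 : (0 < num_edges EB)%N.
  by apply/card_gt0P; exists (a, b); rewrite inE.
have -> : delta / (num_edges EB)%:R / (n a)%:R
          = expR (ln delta - ln (num_edges EB)%:R - ln (n a)%:R).
  by rewrite !expRB !lnK ?posrE ?ltr0n.
rewrite ler_expR /Dbound -mulrA.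
have : 0 <= (n b)%:R / (n a)%:R * lam a b by rewrite mulr_ge0 ?divr_ge0 ?lam_ge0 ?ler0n.
lra.
Qed.

Lemma prob_not_good_le delta : 0 < delta ->
  \sum_(m : config EB n | ~~ good_event lam delta m) config_prob lam m <= delta.
Proof.
move=> delta_gt0; have w_ge0 := bernoulli_weight_ge0 edge_prob01.
pose E := (num_edges EB)%:R : R; have E_ge0 : 0 <= E by rewrite /E ler0n.
under eq_bigl do rewrite good_eventN.
apply: le_trans (union_bound _ _ w_ge0) _.
apply: le_trans (_ : \sum_(ab | EB ab.1 ab.2) delta / E <= _); last first.
  have -> : \sum_(ab | EB ab.1 ab.2) delta / E = delta / E *+ num_edges EB.
    by rewrite /num_edges -sumr_const; apply: eq_bigl => ab; rewrite inE.
  by rewrite mulrn_div_le // ltW.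
apply: ler_sum => -[a b] /= Eab; apply: le_trans (union_bound _ _ w_ge0) _.
apply: le_trans (_ : \sum_(v : liftV n | tag v == a) delta / E / (n a)%:R <= _).
  apply: ler_sum => v /eqP va; rewrite -va in Eab *.
  apply: le_trans (out_deg_tail _ Eab) _.
  exact: tail_le_Dbound Eab (fiber_size_gt0 v) delta_gt0.
by rewrite sum_fiber_const mulrn_div_le // divr_ge0 // ltW.
Qed.

End SparseLift.

Theorem lemma3 (R : realType) (VB : finType) (EB : rel VB) (IB : {set VB})
    (C : finType) (pC : C -> VB) (n : VB -> nat) (lam : VB -> VB -> R)
    (delta : R) :
  acyclic EB ->
  (forall c : C, pC c \in IB) ->
  (forall b, b \in IB -> n b = #|[set c : C | pC c == b]|) ->
  (forall a b, EB a b -> 0 <= lam a b) ->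
  (forall a b, EB a b -> (0 < n a)%N -> lam a b <= (n a)%:R) ->
  0 < delta -> delta <= 1 ->
  1 - delta <= prob_event (EB:=EB) (n:=n) lam (good_event (EB:=EB) (n:=n) lam delta).
Proof.
move=> _ _ _ lam_ge0 lam_le delta_gt0 _.
by rewrite prob_eventC lerB // prob_not_good_le.
Qed.
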